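(* Let $R=\mathbb{Z}[A^{\pm1}]$. Let $G_0\subseteq G_1\subseteq G_2\subseteq\cdots$ be sets with $G_\infty=\bigcup_{i\ge0}G_i$, and let $\mathcal{G}_n$ and $\mathcal{G}_\infty$ be the free $R$-modules with bases $G_n$ and $G_\infty$ (so $\mathcal{G}_n\subseteq\mathcal{G}_\infty$). Let $J_0\subseteq J_1\subseteq\cdots$ be subsets of $\mathcal{G}_\infty$ with $J_\infty=\bigcup_{i\ge0}J_i$, and let $\mathcal{J}_n,\mathcal{J}_\infty$ be the submodules of $\mathcal{G}_\infty$ generated by $J_n,J_\infty$. Suppose: (1) $\mathcal{J}_0\subseteq\mathcal{G}_0$; (2) there is a map $\eta:J_\infty\to G_\infty$ restricting to bijections $J_n\setminus J_{n-1}\to G_n\setminus G_{n-1}$ for all $n\ge1$; (3) for every $n\ge1$ and $r\in J_n\setminus J_{n-1}$ there exist a sign $\epsilon\in\{\pm1\}$, an integer $k$ and $g\in\mathcal{G}_{n-1}$ with $r=\epsilon A^k\eta(r)+g$. Then $\mathcal{G}_\infty/\mathcal{J}_\infty=\mathcal{G}_0/\mathcal{J}_0$, i.e. the natural map $\mathcal{G}_0/\mathcal{J}_0\to\mathcal{G}_\infty/\mathcal{J}_\infty$ is an isomorphism. *)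

From HB Require Import structures.
From mathcomp Require Import all_boot all_order all_algebra.
Set Implicit Arguments. Unset Strict Implicit. Unset Printing Implicit Defensive.
Import Order.TTheory GRing.Theory Num.Theory.
Local Open Scope ring_scope.

(* (R, A) is (isomorphic to) the Laurent polynomial ring Z[A, A^-1]:
   A is a unit, A is transcendental over Z, and every element is of the
   form q(A) / A^n with q an integer polynomial. *)
Definition is_laurent_ring (R : comUnitRingType) (A : R) : Prop :=
  [/\ A \is a GRing.unit,
      (forall p : {poly int}, (map_poly (fun z : int => z%:~R) p : {poly R}).[A] = 0 -> p = 0)
    & (forall r : R, exists (p : {poly int}) (n : nat),
          r = (map_poly (fun z : int => z%:~R) p : {poly R}).[A] / A ^+ n)].

Definition rspan (R : comUnitRingType) (M : lmodType R) (S : M -> Prop) : M -> Prop :=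
  fun x => exists (n : nat) (c : 'I_n -> R) (v : 'I_n -> M),
      (forall i, S (v i)) /\ x = \sum_(i < n) c i *: v i.

Definition is_basis (R : comUnitRingType) (M : lmodType R) (T : Type) (b : T -> M) : Prop :=
  (forall (n : nat) (t : 'I_n -> T) (c : 'I_n -> R),
      injective t -> \sum_(i < n) c i *: b (t i) = 0 -> forall i, c i = 0)
  /\ (forall x : M, rspan (fun y => exists t, y = b t) x).

Definition basis_span (R : comUnitRingType) (M : lmodType R) (T : Type)
  (b : T -> M) (Gn : T -> Prop) : M -> Prop :=
  rspan (fun y => exists2 t, Gn t & y = b t).

From HB Require Import structures.
From mathcomp Require Import all_boot all_order all_algebra.
From mathcomp Require Import boolp.
Import Order.TTheory GRing.Theory Num.Theory.

(* Modulo the relations, a new generator b (eta r), r in J_(n+1) \ J_n, is a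
   unit multiple of an element of the span of G_n, so by induction every
   generator is congruent to an element of the span of G_0.  Conversely, let a
   combination of relations of J_(n+1) lie in the span of G_n.  Expanding each
   new relation r as u_r b (eta r) + g_r, its coordinate at b (eta r) is u_r
   times the total coefficient of r, because eta is injective on new relations;
   as eta r lies outside G_n, that coordinate vanishes, so only relations of
   J_n occur.  Descending from n to 0 gives injectivity. *)

Set Implicit Arguments.
Unset Strict Implicit.
Unset Printing Implicit Defensive.

Local Open Scope ring_scope.

Lemma sum_scale_undup (R : comUnitRingType) (M : lmodType R) (X : eqType)
    (f : X -> M) (w : seq (R * X)) :
  \sum_(q <- w) q.1 *: f q.2 =
  \sum_(x <- undup (map snd w)) (\sum_(q <- w | q.2 == x) q.1) *: f x.
Proof.
under [RHS]eq_bigr => x _ do rewrite scaler_suml big_mkcond.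
rewrite exchange_big /=; apply: eq_big_seq => q qw.
under eq_bigr => x _ do rewrite eq_sym.
rewrite -big_mkcond -big_filter filter_pred1_uniq ?undup_uniq ?mem_undup ?map_f //.
by rewrite big_seq1.
Qed.

Lemma chain_le (X : Type) (P : nat -> X -> Prop) :
  (forall n x, P n x -> P n.+1 x) -> forall m n x, (m <= n)%N -> P m x -> P n x.
Proof.
move=> P_incr m n x mn.
apply: (homo_leq (f := P) (r := fun A B => forall x, A x -> B x)) mn x => //.
by move=> B A C AB BC y /AB /BC.
Qed.

Section Span.
Variables (R : comUnitRingType) (M : lmodType R).
Implicit Types (S : M -> Prop) (s : seq (R * M)) (x y : M).

Definition lincomb s : M := \sum_(p <- s) p.1 *: p.2.

Lemma rspan_lincombP S x :
  rspan S x <-> exists2 s, (forall p, p \in s -> S p.2) & x = lincomb s.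
Proof.
split=> [[n [c [v [Sv ->]]]] | [s Ss ->]].
  exists [seq (c i, v i) | i <- enum 'I_n].
    by move=> _ /mapP [i _ ->]; apply: Sv.
  by rewrite /lincomb big_map big_enum.
exists (size s), (fun i => (nth (0, 0) s i).1), (fun i => (nth (0, 0) s i).2).
split; first by move=> i; apply/Ss/mem_nth.
by rewrite /lincomb (big_nth (0, 0)) big_mkord.
Qed.

Lemma rspan_lincomb S s : (forall p, p \in s -> S p.2) -> rspan S (lincomb s).
Proof. by move=> Ss; apply/rspan_lincombP; exists s. Qed.

Lemma rspan_gen S x : S x -> rspan S x.
Proof.
move=> Sx; apply/rspan_lincombP; exists [:: (1, x)]; last first.
  by rewrite /lincomb big_seq1 scale1r.
by move=> p; rewrite inE => /eqP ->.
Qed.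

Lemma rspan0 S : rspan S 0.
Proof. by apply/rspan_lincombP; exists [::]; rewrite // /lincomb big_nil. Qed.

Lemma rspanD S x y : rspan S x -> rspan S y -> rspan S (x + y).
Proof.
move=> /rspan_lincombP [s Ss ->] /rspan_lincombP [s' Ss' ->].
rewrite -[_ + _]big_cat; apply: rspan_lincomb => p.
by rewrite mem_cat => /orP [/Ss | /Ss'].
Qed.

Lemma rspanZ S a x : rspan S x -> rspan S (a *: x).
Proof.
move=> /rspan_lincombP [s Ss ->].
have -> : a *: lincomb s = lincomb [seq (a * p.1, p.2) | p <- s].
  by rewrite /lincomb big_map scaler_sumr; apply: eq_bigr => p _; rewrite scalerA.
by apply: rspan_lincomb => _ /mapP [p /Ss ? ->].
Qed.

Lemma rspanB S x y : rspan S x -> rspan S y -> rspan S (x - y).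
Proof. by move=> Sx Sy; rewrite -scaleN1r; apply/rspanD/rspanZ. Qed.

Lemma rspan_ind S (Q : M -> Prop) :
  Q 0 -> (forall x y, Q x -> Q y -> Q (x + y)) -> (forall a x, Q x -> Q (a *: x)) ->
  (forall x, S x -> Q x) -> forall x, rspan S x -> Q x.
Proof.
move=> Q0 QD QZ SQ _ [n [c [v [Sv ->]]]].
by elim/big_rec: _ => // i y _ Qy; apply/QD/Qy/QZ/SQ.
Qed.

Lemma rspan_sub S S' :
  (forall x, S x -> rspan S' x) -> forall x, rspan S x -> rspan S' x.
Proof.
by apply: rspan_ind; [apply: rspan0 | apply: rspanD | apply: rspanZ].
Qed.

Lemma rspanU S S' x :
  rspan (fun v => S v \/ S' v) x -> exists y, rspan S y /\ rspan S' (x - y).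
Proof.
move: x; apply: rspan_ind
  => [|x1 x2 [y [Sy S'y]] [z [Sz S'z]] | a x1 [y [Sy S'y]] | v [Sv | S'v]].
- by exists 0; rewrite subr0; split; apply: rspan0.
- by exists (y + z); rewrite opprD addrACA; split; apply: rspanD.
- by exists (a *: y); rewrite -scalerBr; split; apply: rspanZ.
- by exists v; rewrite subrr; split; [apply: rspan_gen | apply: rspan0].
- by exists 0; rewrite subr0; split; [apply: rspan0 | apply: rspan_gen].
Qed.

Lemma rspan_chain (P : nat -> M -> Prop) x :
  (forall n v, P n v -> P n.+1 v) ->
  rspan (fun v => exists n, P n v) x -> exists n, rspan (P n) x.
Proof.
move=> P_incr; have P_le := chain_le P_incr.
have rspan_le m n : (m <= n)%N -> forall v, rspan (P m) v -> rspan (P n) v.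
  by move=> mn; apply: rspan_sub => v /(P_le _ _ _ mn)/rspan_gen.
move: x; apply: rspan_ind => [|x1 x2 [m x1P] [n x2P] | a x1 [n x1P] | v [n Pv]].
- by exists 0%N; apply: rspan0.
- exists (maxn m n); apply: rspanD.
    exact: rspan_le (leq_maxl m n) _ x1P.
  exact: rspan_le (leq_maxr m n) _ x2P.
- by exists n; apply: rspanZ.
- by exists n; apply: rspan_gen.
Qed.

Lemma lincomb_eq0 s : (forall x, \sum_(p <- s | p.2 == x) p.1 = 0) -> lincomb s = 0.
Proof.
move=> coef0; rewrite /lincomb (sum_scale_undup id).
by apply: big1 => x _; rewrite coef0 scale0r.
Qed.

End Span.

Section Basis.
Variables (R : comUnitRingType) (M : lmodType R) (T : eqType) (b : T -> M).
Hypothesis b_basis : is_basis b.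
Implicit Types (P : T -> Prop) (w : seq (R * T)).

Lemma basis_sum_eq0 w :
  \sum_(q <- w) q.1 *: b q.2 = 0 -> forall t, \sum_(q <- w | q.2 == t) q.1 = 0.
Proof.
rewrite sum_scale_undup; set u := undup _ => sum0 t.
have [tu | tNu] := boolP (t \in u); last first.
  apply: big1_seq => q /andP [/eqP qt qw]; case/negP: tNu.
  by rewrite mem_undup -qt map_f.
rewrite (big_nth t) big_mkord in sum0.
have nth_inj : injective (fun i : 'I_(size u) => nth t u i).
  by move=> i j /eqP; rewrite nth_uniq ?undup_uniq // => /eqP /val_inj.
have t_idx : (index t u < size u)%N by rewrite index_mem.
by have := b_basis.1 _ _ _ nth_inj sum0 (Ordinal t_idx); rewrite /= nth_index.
Qed.

Lemma basis_spanP P x :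
  basis_span b P x ->
  exists2 w, (forall q, q \in w -> P q.2) & x = \sum_(q <- w) q.1 *: b q.2.
Proof.
move=> /rspan_lincombP [s Ss ->]; elim: s Ss => [|p s IH] Ss.
  by exists [::]; rewrite // /lincomb !big_nil.
have [t Pt pt] := Ss p (mem_head p s).
have [w Pw sE] := IH (fun q qs => Ss q (mem_behead (s := p :: s) qs)).
exists ((p.1, t) :: w); last by rewrite /lincomb !big_cons -/(lincomb s) sE pt.
by move=> q; rewrite inE => /predU1P [-> | /Pw].
Qed.

Lemma basis_span_coef P w :
  (forall q, q \in w -> ~ P q.2) -> basis_span b P (\sum_(q <- w) q.1 *: b q.2) ->
  forall t, \sum_(q <- w | q.2 == t) q.1 = 0.
Proof.
move=> wNP /basis_spanP [w' w'P sum_eq] t.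
have sum0 : \sum_(q <- w ++ [seq (- q.1, q.2) | q <- w']) q.1 *: b q.2 = 0.
  rewrite big_cat big_map /= sum_eq -big_split /=.
  by apply: big1 => q _; rewrite scaleNr addrN.
have := basis_sum_eq0 sum0 t; rewrite big_cat big_map /=.
have [Pt | NPt] := pselect (P t).
  by move=> _; apply: big1_seq => q /andP [/eqP qt /wNP]; rewrite qt.
rewrite [X in _ + X]big1_seq ?addr0 // => q /andP [/eqP qt /w'P].
by rewrite qt => /NPt.
Qed.

End Basis.

Section Filtration.
Variables (R : comUnitRingType) (M : lmodType R) (T : eqType) (b : T -> M).
Variables (G : nat -> T -> Prop) (J : nat -> M -> Prop) (eta : M -> T).
Hypothesis b_basis : is_basis b.
Hypothesis G_incr : forall n t, G n t -> G n.+1 t.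
Hypothesis G_cover : forall t, exists n, G n t.
Hypothesis J_incr : forall n x, J n x -> J n.+1 x.
Hypothesis J0_sub : forall x, rspan (J 0) x -> basis_span b (G 0) x.
Hypothesis eta_new :
  forall n r, J n.+1 r -> ~ J n r -> G n.+1 (eta r) /\ ~ G n (eta r).
Hypothesis eta_inj : forall n r s,
  J n.+1 r -> ~ J n r -> J n.+1 s -> ~ J n s -> eta r = eta s -> r = s.
Hypothesis eta_onto :
  forall n t, G n.+1 t -> ~ G n t -> exists r, [/\ J n.+1 r, ~ J n r & eta r = t].
Hypothesis new_decomp : forall n r, J n.+1 r -> ~ J n r ->
  exists u g, [/\ u \is a GRing.unit, basis_span b (G n) g & r = u *: b (eta r) + g].

Local Notation Jinf := (fun x => exists n, J n x).

Lemma Gspan_le m n x : (m <= n)%N -> basis_span b (G m) x -> basis_span b (G n) x.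
Proof.
move=> mn; apply: rspan_sub => _ [t Gt ->]; apply: rspan_gen; exists t => //.
exact: chain_le G_incr _ _ _ mn Gt.
Qed.

Lemma J_Gspan n x : J n x -> basis_span b (G n) x.
Proof.
elim: n x => [|n IH] x Jx; first exact/J0_sub/rspan_gen.
have [Jnx | NJnx] := pselect (J n x); first exact/(Gspan_le (leqnSn n))/IH.
have [u [g [_ gG ->]]] := new_decomp Jx NJnx.
apply: rspanD; last exact: Gspan_le (leqnSn n) gG.
by apply/rspanZ/rspan_gen; exists (eta x); first exact: (eta_new Jx NJnx).1.
Qed.

Lemma basis_vec_G0_Jinf n t :
  G n t -> rspan (fun v => (exists2 t', G 0 t' & v = b t') \/ Jinf v) (b t).
Proof.
elim: n t => [|n IH] t Gt; first by apply: rspan_gen; left; exists t.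
have [Gnt | NGnt] := pselect (G n t); first exact: IH.
have [r [Jr NJr <-]] := eta_onto Gt NGnt.
have [u [g [u_unit gG r_eq]]] := new_decomp Jr NJr.
have -> : b (eta r) = u^-1 *: (r - g).
  by rewrite {2}r_eq addrK scalerA mulVr ?scale1r.
apply/rspanZ/rspanB; first by apply: rspan_gen; right; exists n.+1.
by apply: rspan_sub gG => _ [t' Gt' ->]; apply: IH.
Qed.

Lemma Jinf_mod_G0 x : exists y, basis_span b (G 0) y /\ rspan Jinf (x - y).
Proof.
apply: rspanU; move: (b_basis.2 x); apply: rspan_sub => _ [t ->].
by have [n Gnt] := G_cover t; apply: basis_vec_G0_Jinf Gnt.
Qed.

Lemma new_decomp_fun n : {f : M -> R * M & forall r, J n.+1 r -> ~ J n r ->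
  [/\ (f r).1 \is a GRing.unit, basis_span b (G n) (f r).2
    & r = (f r).1 *: b (eta r) + (f r).2]}.
Proof.
apply: (@choice _ _ (fun r (ug : R * M) => J n.+1 r -> ~ J n r ->
  [/\ ug.1 \is a GRing.unit, basis_span b (G n) ug.2 & r = ug.1 *: b (eta r) + ug.2])).
move=> r; have [[Jr NJr] | Nnew] := pselect (J n.+1 r /\ ~ J n r).
  by have [u [g decomp]] := new_decomp Jr NJr; exists (u, g).
by exists (0, 0) => Jr NJr; case: Nnew.
Qed.

Lemma new_lincomb_eq0 n s :
  (forall p, p \in s -> J n.+1 p.2 /\ ~ J n p.2) ->
  basis_span b (G n) (lincomb s) -> lincomb s = 0.
Proof.
move=> s_new sG; have [f f_spec] := new_decomp_fun n.
pose w := [seq (p.1 * (f p.2).1, eta p.2) | p <- s].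
have lead_eq : \sum_(q <- w) q.1 *: b q.2
    = lincomb s - lincomb [seq (p.1, (f p.2).2) | p <- s].
  rewrite /lincomb !big_map -sumrB; apply: eq_big_seq => p /s_new [Jp NJp] /=.
  have [_ _ p_eq] := f_spec _ Jp NJp.
  by rewrite [X in _ = _ *: X - _]p_eq scalerDr scalerA addrK.
have lead_G : basis_span b (G n) (\sum_(q <- w) q.1 *: b q.2).
  rewrite lead_eq; apply: rspanB sG _.
  apply: (@rspan_sub _ _ (basis_span b (G n))) => //.
  apply: rspan_lincomb => _ /mapP [p /s_new [Jp NJp] ->].
  by have [] := f_spec _ Jp NJp.
have w_new q : q \in w -> ~ G n q.2.
  by move=> /mapP [p /s_new [Jp NJp] ->]; apply: (eta_new Jp NJp).2.
have lead_coef0 := basis_span_coef b_basis w_new lead_G.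
apply: lincomb_eq0 => r.
have [/mapP [p ps ->] | rNs] := boolP (r \in map snd s); last first.
  apply: big1_seq => q /andP [/eqP qr qs]; case/negP: rNs.
  by rewrite -qr map_f.
have [Jp NJp] := s_new p ps; have [u_unit _ _] := f_spec _ Jp NJp.
apply: (mulIr u_unit); rewrite /= mul0r -[RHS](lead_coef0 (eta p.2)).
rewrite big_map mulr_suml /= big_seq_cond [RHS]big_seq_cond.
apply: eq_big => [q | q /andP [_ /eqP ->]] //.
case qs: (q \in s) => //=; apply/eqP/eqP => [-> // |].
by have [Jq NJq] := s_new q qs; apply: eta_inj Jq NJq Jp NJp.
Qed.

Lemma rspan_J_pred n x : rspan (J n.+1) x -> basis_span b (G n) x -> rspan (J n) x.
Proof.
move=> /rspan_lincombP [s sJ ->] xG.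
pose old (p : R * M) := `[< J n p.2 >].
have s_split : lincomb s = lincomb (filter old s) + lincomb (filter (predC old) s).
  by rewrite /lincomb !big_filter [LHS](bigID old).
have old_J : rspan (J n) (lincomb (filter old s)).
  by apply: rspan_lincomb => p; rewrite mem_filter => /andP [/asboolP].
rewrite s_split (@new_lincomb_eq0 n (filter (predC old) s)) ?addr0 //.
  by move=> p; rewrite mem_filter => /andP [/asboolPn NJp /sJ].
have := rspanB xG (rspan_sub (@J_Gspan n) old_J).
by rewrite s_split addrC addKr.
Qed.

Lemma rspan_J_G0 n x : rspan (J n) x -> basis_span b (G 0) x -> rspan (J 0) x.
Proof.
elim: n x => [// | n IH] x xJ xG0.
exact: IH (rspan_J_pred xJ (Gspan_le (leq0n n) xG0)) xG0.
Qed.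

Lemma rspan_Jinf_G0 y : basis_span b (G 0) y -> rspan Jinf y -> rspan (J 0) y.
Proof. by move=> yG0 /(rspan_chain J_incr) [n yJ]; apply: rspan_J_G0 yJ yG0. Qed.

End Filtration.

Theorem lemma4p4 (R : comUnitRingType) (A : R) (M : lmodType R) (T : Type)
  (b : T -> M) (G : nat -> T -> Prop) (J : nat -> M -> Prop) (eta : M -> T) :
  is_laurent_ring A ->
  (* M = free module on G_oo = T with basis b, G_oo = union of the G_n *)
  is_basis b ->
  (forall n t, G n t -> G n.+1 t) ->
  (forall t, exists n, G n t) ->
  (* J_0 ⊆ J_1 ⊆ ... ⊆ M *)
  (forall n x, J n x -> J n.+1 x) ->
  (* (1) span J_0 ⊆ span G_0 *)
  (forall x, rspan (J 0%N) x -> basis_span b (G 0%N) x) ->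
  (* (2) eta restricts to bijections J_n \ J_(n-1) -> G_n \ G_(n-1), n >= 1 *)
  (forall n, (0 < n)%N ->
     (forall r, J n r -> ~ J n.-1 r -> G n (eta r) /\ ~ G n.-1 (eta r))
     /\ (forall r s, J n r -> ~ J n.-1 r -> J n s -> ~ J n.-1 s -> eta r = eta s -> r = s)
     /\ (forall t, G n t -> ~ G n.-1 t -> exists r, [/\ J n r, ~ J n.-1 r & eta r = t])) ->
  (* (3) r = eps A^k eta(r) + g with g in the span of G_(n-1) *)
  (forall n, (0 < n)%N -> forall r, J n r -> ~ J n.-1 r ->
     exists (eps : R) (k : int) (g : M),
       [/\ eps = 1 \/ eps = -1, basis_span b (G n.-1) g
         & r = (eps * A ^ k) *: b (eta r) + g]) ->
  (* conclusion: the natural map G_0/J_0 -> G_oo/J_oo is an isomorphism *)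
  let Jinf := fun x => exists n, J n x in
  (* surjective *)
  (forall x : M, exists y, basis_span b (G 0%N) y /\ rspan Jinf (x - y))
  /\
  (* injective *)
  (forall y : M, basis_span b (G 0%N) y -> rspan Jinf y -> rspan (J 0%N) y).
Proof.
move=> [A_unit _ _] b_basis G_incr G_cover J_incr J0_sub eta_bij decomp Jinf.
have eta_new n := (eta_bij n.+1 isT).1.
have eta_inj n := (eta_bij n.+1 isT).2.1.
have eta_onto n := (eta_bij n.+1 isT).2.2.
have new_decomp n r : J n.+1 r -> ~ J n r -> exists u g,
    [/\ u \is a GRing.unit, basis_span b (G n) g & r = u *: b (eta r) + g].
  move=> Jr NJr; have [eps [k [g [eps_pm gG r_eq]]]] := decomp n.+1 isT r Jr NJr.
  exists (eps * A ^ k), g; split=> //; rewrite unitrM unitrXz // andbT.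
  by case: eps_pm => ->; rewrite ?unitrN unitr1.
split.
- exact: (@Jinf_mod_G0 _ _ {classic T} b G J eta b_basis G_cover eta_onto
    new_decomp).
- exact: (@rspan_Jinf_G0 _ _ {classic T} b G J eta b_basis G_incr J_incr J0_sub
    eta_new eta_inj new_decomp).
Qed.
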